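(* There exist $d\ge1$, $\mu\in\mathbb{R}^d$, a symmetric positive semidefinite $\Sigma\in\mathbb{R}^{d\times d}$, $c\in\mathbb{R}^d$ with $c_f>0$, $\alpha>0$ and $\delta\in(0,1/2)$ such that the problem $$\min_{e\in\mathbb{R}^d}\ \sum_f c_f|e_f|\quad\text{s.t.}\quad \alpha-\mu^\top e-\Phi^{-1}(\delta)\,\|\Sigma^{1/2}e\|_2\le0$$ has an optimal solution, and every optimal solution has at least two nonzero coordinates (i.e. the agent must invest effort into more than one feature).
   Context: $\Phi$ is the standard normal CDF. The constraint is equivalent to $\mathbb{P}_{Z\sim\mathcal{N}(\mu,\Sigma)}[Z^\top e\ge\alpha]\ge1-\delta$, where $Z$ represents the agent's Gaussian belief about the vector $\mathbb{C}h$ of total feature contributions under partially incomplete information; the objective is the weighted $\ell_1$ cost of effort. *)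

From HB Require Import structures.
From mathcomp Require Import all_boot all_order all_algebra.
From mathcomp Require Import all_classical all_reals all_analysis.
From mathcomp Require Import normal_distribution.
Set Implicit Arguments. Unset Strict Implicit. Unset Printing Implicit Defensive.
Import Order.TTheory GRing.Theory Num.Theory.
Local Open Scope ring_scope.
Local Open Scope classical_set_scope.

Definition Phi (R : realType) (x : R) : R :=
  fine (normal_prob (0:R) 1 `]-oo, x]).

Definition psd (R : realType) (d : nat) (A : 'M[R]_d) : Prop :=
  A^T = A /\ forall v : 'cV[R]_d, 0 <= (v^T *m A *m v) 0 0.

Definition is_psd_sqrt (R : realType) (d : nat) (S Sigma : 'M[R]_d) : Prop :=
  psd S /\ S *m S = Sigma.

Definition norm2 (R : realType) (d : nat) (v : 'cV[R]_d) : R :=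
  Num.sqrt (\sum_i (v i 0) ^+ 2).

Definition cost (R : realType) (d : nat) (c e : 'cV[R]_d) : R :=
  \sum_i c i 0 * `|e i 0|.

(* Chance constraint alpha - mu^T e - q ||S e||_2 <= 0, with q = Phi^{-1}(delta). *)
Definition feasible (R : realType) (d : nat) (mu : 'cV[R]_d) (S : 'M[R]_d)
  (alpha q : R) (e : 'cV[R]_d) : Prop :=
  alpha - (mu^T *m e) 0 0 - q * norm2 (S *m e) <= 0.

Definition optimal (R : realType) (d : nat) (mu : 'cV[R]_d) (S : 'M[R]_d)
  (c : 'cV[R]_d) (alpha q : R) (e : 'cV[R]_d) : Prop :=
  feasible mu S alpha q e /\
  forall e' : 'cV[R]_d, feasible mu S alpha q e' -> cost c e <= cost c e'.

From HB Require Import structures.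
From mathcomp Require Import all_boot all_order all_algebra.
From mathcomp Require Import all_classical all_reals all_analysis.
From mathcomp Require Import normal_distribution.
From mathcomp Require Import lra ring measurable_realfun.
Set Implicit Arguments. Unset Strict Implicit. Unset Printing Implicit Defensive.
Import Order.TTheory GRing.Theory Num.Theory.
Local Open Scope ring_scope.

(* Take two features with unit means and unit costs, alpha = 1, delta = Phi(-1),
   and Sigma = [[2, -2], [-2, 2]], whose kernel is spanned by (1, 1): effort spread
   evenly carries no uncertainty. As q = Phi^-1(delta) < 0, the constraint reads
   e0 + e1 >= 1 + |q| sqrt 2 |e0 - e1|, so every feasible effort costs at least
   e0 + e1 >= 1, with equality only when e0 = e1 = 1/2. Hence (1/2, 1/2) is the
   unique optimum. The facts 0 < Phi(-1) < 1/2 and Phi(-1) < Phi(0) follow from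
   the density bound peak (1 - x^2/2) <= pdf(x) integrated over short intervals. *)

Section StandardNormalCDF.
Variable R : realType.
Local Notation P := (normal_prob (0 : R) 1).
Local Notation peak := (normal_peak (1 : R)).

Lemma normal_pdf01_ge (M x : R) : x ^+ 2 <= M ->
  peak * (1 - M / 2) <= normal_pdf 0 1 x.
Proof.
move=> xM; rewrite normal_pdfE ?oner_neq0 //.
rewrite ler_wpM2l ?normal_peak_ge0 // /normal_fun subr0 expr1n.
apply: le_trans (expR_ge1Dx _); rewrite mulNr lerD2l lerN2; lra.
Qed.

Lemma normal_prob01_itv_ge (a b M : R) :
  a <= b -> a ^+ 2 <= M -> b ^+ 2 <= M -> M <= 2 ->
  ((peak * (1 - M / 2) * (b - a))%:E <= P `]a, b])%E.
Proof.
move=> ab aM bM M2; set m := peak * (1 - M / 2).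
have m0 : 0 <= m by rewrite mulr_ge0 ?normal_peak_ge0 //; lra.
have -> : ((m * (b - a))%:E = \int[lebesgue_measure]_(x in `]a, b]) (cst m%:E) x)%E.
  rewrite integral_cst //= lebesgue_measure_itv /= lte_fin.
  case: ltP => [_|ba]; first by rewrite -EFinD -EFinM.
  have -> : b = a by apply/le_anti; rewrite ba ab.
  by rewrite subrr mulr0 mule0.
apply: ge0_le_integral => //=.
- by apply/measurable_EFinP; apply: measurable_funTS; exact: measurable_normal_pdf.
- move=> x; rewrite in_itv /= => /andP[ax xb].
  by rewrite lee_fin normal_pdf01_ge //; case: (leP 0 x) => x0; nra.
Qed.

Lemma normal_prob01_fin_num (A : set R) : measurable A -> P A \is a fin_num.
Proof.
move=> mA; rewrite ge0_fin_numE ?measure_ge0 //.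
by apply: le_lt_trans (probability_le1 P mA) _; rewrite ltry.
Qed.

Lemma Phi_ge0 (x : R) : 0 <= Phi x.
Proof. by rewrite fine_ge0 ?measure_ge0. Qed.

Lemma Phi_le1 (x : R) : Phi x <= 1.
Proof.
by rewrite -lee_fin fineK ?normal_prob01_fin_num ?probability_le1.
Qed.

Lemma PhiD (a b : R) : a <= b -> Phi b = Phi a + fine (P `]a, b]).
Proof.
move=> ab; rewrite /Phi (itv_bndbnd_setU (x := BRight a)) ?bnd_simp //.
have disj : (`]-oo, a] `&` `]a, b] = set0 :> set R)%classic.
  rewrite -subset0 => x [] /=; rewrite !in_itv /= => xa /andP[ax _].
  by move: (lt_le_trans ax xa); rewrite ltxx.
by rewrite measureU // fineD // normal_prob01_fin_num.
Qed.

Lemma Phi_le (a b : R) : a <= b -> Phi a <= Phi b.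
Proof. by move=> ab; rewrite (PhiD ab) lerDl fine_ge0 ?measure_ge0. Qed.

Lemma Phi_increment (a b M : R) :
  a <= b -> a ^+ 2 <= M -> b ^+ 2 <= M -> M <= 2 ->
  Phi a + peak * (1 - M / 2) * (b - a) <= Phi b.
Proof.
move=> ab aM bM M2; rewrite (PhiD ab) lerD2l -lee_fin.
by rewrite fineK ?normal_prob01_fin_num ?normal_prob01_itv_ge.
Qed.

Lemma normal_peak1_gt : 27 / 80 < peak.
Proof.
have [/andP[_ pi_lt4] _] := pihalf_02_cos_pihalf R.
have s0 : 0 < Num.sqrt (pi *+ 2 : R) by rewrite sqrtr_gt0 pmulrn_lgt0 ?pi_gt0.
have s_lt : Num.sqrt (pi *+ 2 : R) < 80 / 27.
  rewrite -[X in _ < X]ger0_norm // -sqrtr_sqr ltr_sqrt ?exprn_gt0 //.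
  rewrite -mulr_natr; lra.
rewrite /normal_peak expr1n mul1r -(ltr_pM2r s0) mulVf ?gt_eqF //; nra.
Qed.

Lemma Phi_N1_gt0 : 0 < Phi (-1 : R).
Proof.
have := normal_peak_gt0 (oner_neq0 R); have := Phi_ge0 (-6/5).
have := @Phi_increment (-6/5) (-1) (3/2) ltac:(lra) ltac:(nra) ltac:(nra) ltac:(lra).
nra.
Qed.

Lemma Phi_N1_lt_Phi0 : Phi (-1 : R) < Phi 0.
Proof.
have := normal_peak_gt0 (oner_neq0 R).
have := @Phi_increment (-1) 0 1 ltac:(lra) ltac:(nra) ltac:(nra) ltac:(lra).
nra.
Qed.

(* Six slices of width 1/3 give ]-1, 1] mass at least (40/27) peak, which exceeds
   1/2 exactly when peak > 27/80. *)
Lemma Phi_N1_lt_half : Phi (-1 : R) < 1 / 2.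
Proof.
have := normal_peak1_gt; have := Phi_le1 1.
have := @Phi_increment (-1) (-2/3) 1 ltac:(lra) ltac:(nra) ltac:(nra) ltac:(lra).
have := @Phi_increment (-2/3) (-1/3) (4/9) ltac:(lra) ltac:(nra) ltac:(nra) ltac:(lra).
have := @Phi_increment (-1/3) 0 (1/9) ltac:(lra) ltac:(nra) ltac:(nra) ltac:(lra).
have := @Phi_increment 0 (1/3) (1/9) ltac:(lra) ltac:(nra) ltac:(nra) ltac:(lra).
have := @Phi_increment (1/3) (2/3) (4/9) ltac:(lra) ltac:(nra) ltac:(nra) ltac:(lra).
have := @Phi_increment (2/3) 1 1 ltac:(lra) ltac:(nra) ltac:(nra) ltac:(lra).
lra.
Qed.
End StandardNormalCDF.

Lemma norm2_psd_sqrt (R : realType) (d : nat) (S Sigma : 'M[R]_d) (e : 'cV[R]_d) :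
  is_psd_sqrt S Sigma -> norm2 (S *m e) = Num.sqrt ((e^T *m Sigma *m e) 0 0).
Proof.
move=> [[ST _] <-].
have -> : e^T *m (S *m S) *m e = (S *m e)^T *m (S *m e).
  by rewrite trmx_mul ST !mulmxA.
by rewrite /norm2 mxE; congr Num.sqrt; apply: eq_bigr => i _; rewrite !mxE expr2.
Qed.

Section TwoFeatures.
Variable R : realType.
Local Notation e0 e := (e ord0 0 : R).
Local Notation e1 e := (e ord_max 0 : R).

Lemma sum_ord2 (F : 'I_2 -> R) : \sum_(i < 2) F i = F ord0 + F ord_max.
Proof. by rewrite !big_ord_recr big_ord0 /= add0r; congr (F _ + F _); apply: val_inj. Qed.

Definition diffmx (a : R) : 'M[R]_2 := \matrix_(i, j) (if i == j then a else - a).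

Lemma diffmx_form (a : R) (v : 'cV[R]_2) :
  (v^T *m diffmx a *m v) 0 0 = a * (e0 v - e1 v) ^+ 2.
Proof. by rewrite !mxE sum_ord2 !mxE !sum_ord2 !mxE /=; ring. Qed.

Lemma psd_diffmx (a : R) : 0 <= a -> psd (diffmx a).
Proof.
move=> a0; split; first by apply/matrixP => i j; rewrite !mxE eq_sym.
by move=> v; rewrite diffmx_form mulr_ge0 ?sqr_ge0.
Qed.

Lemma diffmxM (a b : R) : diffmx a *m diffmx b = diffmx (2 * a * b).
Proof.
apply/matrixP => i j; rewrite !mxE sum_ord2 !mxE.
by case: i => [[|[|i]] ?] //; case: j => [[|[|j]] ?] //=; ring.
Qed.

Lemma is_psd_sqrt_diffmx : is_psd_sqrt (diffmx 1) (diffmx 2).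
Proof. by split; [exact: psd_diffmx ler01 | rewrite diffmxM !mulr1]. Qed.

Local Notation one := (const_mx 1 : 'cV[R]_2).
Local Notation half := (const_mx (1 / 2) : 'cV[R]_2).

Lemma cost_one (e : 'cV[R]_2) : cost one e = `|e0 e| + `|e1 e|.
Proof. by rewrite /cost sum_ord2 !mxE !mul1r. Qed.

Lemma cost_one_half : cost one half = 1.
Proof. by rewrite cost_one !mxE ger0_norm; lra. Qed.

Lemma feasible_oneE (S : 'M[R]_2) (q : R) (e : 'cV[R]_2) :
  is_psd_sqrt S (diffmx 2) ->
  feasible one S 1 q e <-> 1 - q * (Num.sqrt 2 * `|e0 e - e1 e|) <= e0 e + e1 e.
Proof.
move=> hS; rewrite /feasible (norm2_psd_sqrt _ hS) diffmx_form sqrtrM ?sqrtr_sqr //.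
by rewrite mxE sum_ord2 !mxE !mul1r; split=> ?; lra.
Qed.

Section NegativeQuantile.
Variables (S : 'M[R]_2) (q : R).
Hypotheses (hS : is_psd_sqrt S (diffmx 2)) (q_lt0 : q < 0).

Lemma feasible_half : feasible one S 1 q half.
Proof. by apply/(feasible_oneE _ _ hS); rewrite !mxE subrr normr0 !mulr0; lra. Qed.

Lemma cost_one_ge1 (e : 'cV[R]_2) : feasible one S 1 q e -> 1 <= cost one e.
Proof.
move/(feasible_oneE _ _ hS); rewrite cost_one.
have : q * (Num.sqrt 2 * `|e0 e - e1 e|) <= 0 by rewrite nmulr_rle0 ?mulr_ge0.
have := ler_norm (e0 e); have := ler_norm (e1 e); lra.
Qed.

Lemma optimal_half : optimal one S one 1 q half.
Proof. by split=> [|e /cost_one_ge1]; rewrite ?cost_one_half //; exact: feasible_half. Qed.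

Lemma optimal_eq_half (e : 'cV[R]_2) : optimal one S one 1 q e -> e = half.
Proof.
move=> [fe /(_ _ feasible_half)]; rewrite cost_one_half cost_one => cost_le1.
move/(feasible_oneE _ _ hS): fe => fe.
have : 0 <= q * (Num.sqrt 2 * `|e0 e - e1 e|).
  by have := ler_norm (e0 e); have := ler_norm (e1 e); lra.
rewrite nmulr_rge0 // pmulr_rle0 ?sqrtr_gt0 // normr_le0 subr_eq0 => /eqP e01.
have e1_half : e1 e = 1 / 2.
  rewrite e01 subrr normr0 !mulr0 subr0 in fe; rewrite e01 in cost_le1.
  by have := ler_norm (e1 e); lra.
apply/matrixP => i j; rewrite !ord1 mxE -e1_half.
case: i => [[|[|i]] ?] //=; last by congr (e _ _); exact: val_inj.
by rewrite -e01; congr (e _ _); exact: val_inj.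
Qed.
End NegativeQuantile.
End TwoFeatures.

Theorem lemma6 (R : realType) :
  exists (d : nat) (mu : 'cV[R]_d) (Sigma : 'M[R]_d) (c : 'cV[R]_d)
         (alpha delta : R),
    [/\ (0 < d)%N, psd Sigma, (forall f, 0 < c f 0), 0 < alpha
      & 0 < delta < 1/2] /\
    (exists S : 'M[R]_d, is_psd_sqrt S Sigma) /\ (exists q : R, Phi q = delta) /\
    forall (S : 'M[R]_d) (q : R), is_psd_sqrt S Sigma -> Phi q = delta ->
      (exists e, optimal mu S c alpha q e) /\
      (forall e, optimal mu S c alpha q e ->
         exists f g : 'I_d, [/\ f != g, e f 0 != 0 & e g 0 != 0]).
Proof.
exists 2%N, (const_mx 1), (diffmx 2), (const_mx 1), 1, (Phi (-1)).
split; first split => //.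
- by apply: psd_diffmx; lra.
- by move=> f; rewrite mxE ltr01.
- by rewrite Phi_N1_gt0 Phi_N1_lt_half.
split; first by exists (diffmx 1); exact: is_psd_sqrt_diffmx.
split; first by exists (-1).
move=> S q hS Pq.
have q_lt0 : q < 0.
  by rewrite ltNge; apply/negP => /Phi_le; rewrite Pq leNgt Phi_N1_lt_Phi0.
split; first by exists (const_mx (1 / 2)); exact: optimal_half.
move=> e /(optimal_eq_half hS q_lt0) ->.
by exists ord0, ord_max; rewrite !mxE; split => //; lra.
Qed.
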